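(* Let $T>0$, $\alpha>0$, $\beta>0$, $\sigma>0$, $u_1>0$, let $N$ be a positive integer and $R_0\in\mathbb R$, and let $\hat u$ be an optimal control for the problem $$\int_0^T\big(\alpha R(t)+\beta u(t)\big)\,dt\to\inf,\qquad \dot R(t)=-u(t)R(t)+N\sigma^2,\qquad R(0)=R_0,\qquad 0\le u(t)\le u_1 .$$ Then there exists $\varepsilon>0$ such that $\hat u(t)=0$ for all $t\in(T-\varepsilon,T)$.
   Context: Admissible controls are functions $u\in L^\infty[0,T]$ with $0\le u(t)\le u_1$ for a.e. $t$ (identified up to a.e. equality); the corresponding state $R$ is the absolutely continuous solution of $\dot R=-uR+N\sigma^2$, $R(0)=R_0$. An optimal control is an admissible control minimizing the integral functional. *)

From HB Require Import structures.
From mathcomp Require Import all_boot all_order all_algebra.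
From mathcomp Require Import all_classical all_reals all_analysis.
Set Implicit Arguments. Unset Strict Implicit. Unset Printing Implicit Defensive.
Import Order.TTheory GRing.Theory Num.Theory.
Import numFieldNormedType.Exports.
Local Open Scope classical_set_scope.
Local Open Scope ring_scope.

Definition admissible {R : realType} (T u1 : R) (u : R -> R) : Prop :=
  measurable_fun `[0, T] u /\
  {ae (@lebesgue_measure R), forall t, t \in `[0, T] -> 0 <= u t <= u1}.

(* x is the absolutely continuous solution on [0,T] of
   x' = - u x + N sigma^2, x(0) = R0, written in integral form
   (x continuous, so the integrand is Lebesgue integrable). *)
Definition is_state {R : realType} (T R0 : R) (N : nat) (sigma : R)
    (u x : R -> R) : Prop :=
  {within `[0, T], continuous x} /\
  forall t, 0 <= t <= T ->
    x t = R0 + Rintegral (@lebesgue_measure R) `[0, t]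
                 (fun s => - u s * x s + N%:R * sigma ^+ 2).

Definition cost {R : realType} (T alpha beta : R) (u x : R -> R) : R :=
  Rintegral (@lebesgue_measure R) `[0, T] (fun t => alpha * x t + beta * u t).

Definition optimal_control {R : realType} (T alpha beta sigma u1 R0 : R)
    (N : nat) (uhat : R -> R) : Prop :=
  admissible T u1 uhat /\
  exists xhat, is_state T R0 N sigma uhat xhat /\
    forall u x, admissible T u1 u -> is_state T R0 N sigma u x ->
      cost T alpha beta uhat xhat <= cost T alpha beta u x.

From HB Require Import structures.
From mathcomp Require Import all_boot all_order all_algebra.
From mathcomp Require Import all_classical all_reals all_analysis.
From mathcomp Require Import ring.
Set Implicit Arguments.
Unset Strict Implicit.
Unset Printing Implicit Defensive.

Import Order.TTheory GRing.Theory Num.Theory.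
Import numFieldNormedType.Exports.
Local Open Scope classical_set_scope.
Local Open Scope ring_scope.

(* Compare the optimal control u with the control that agrees with u up to
   time s and vanishes on ]s, T].  Let U be the integral of u over ]s, T] and M
   a bound of |x| on [0, T].  Switching off saves beta * U of control cost;
   since it only removes the sink term - u x from the state equation, it raises
   the state by at most M * U on ]s, T], hence the state cost by at most
   alpha * M * (T - s) * U.  Once alpha * M * (T - s) < beta, optimality forces
   U = 0, i.e. u = 0 almost everywhere on ]s, T]. *)

(* Instance resolution does not find this filter by itself. *)
#[local] Instance lebesgue_ae_filter (R : realType) :
  Filter (nbhs (almost_everywhere (@lebesgue_measure R))) :=
  @ae_filter_ringOfSetsType _ _ R lebesgue_measure.

Definition bounded_measurable (R : realType) (A : set R) (f : R -> R) :=
  measurable_fun A f /\ exists B : R, forall x, A x -> `|f x| <= B.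

Section BoundedMeasurable.
Variables (R : realType) (A : set R).
Hypothesis mA : measurable A.

Lemma bounded_measurable_cst (k : R) : bounded_measurable A (fun=> k).
Proof. by split => //; exists `|k|. Qed.

Lemma bounded_measurableN f :
  bounded_measurable A f -> bounded_measurable A (fun t => - f t).
Proof.
move=> [mf [B fB]]; split; first exact: measurable_realfun.measurable_funN.
by exists B => x Ax; rewrite normrN; exact: fB.
Qed.

Lemma bounded_measurableD f g : bounded_measurable A f ->
  bounded_measurable A g -> bounded_measurable A (fun t => f t + g t).
Proof.
move=> [mf [B1 fB]] [mg [B2 gB]]; split.
  exact: measurable_realfun.measurable_funD.
exists (B1 + B2) => x Ax; apply: le_trans (ler_normD _ _) _.
exact: lerD (fB x Ax) (gB x Ax).
Qed.

Lemma bounded_measurableM f g : bounded_measurable A f ->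
  bounded_measurable A g -> bounded_measurable A (fun t => f t * g t).
Proof.
move=> [mf [B1 fB]] [mg [B2 gB]]; split.
  exact: measurable_realfun.measurable_funM.
by exists (B1 * B2) => x Ax; rewrite normrM ler_pM ?fB ?gB.
Qed.

Lemma bounded_measurableZ (k : R) f :
  bounded_measurable A f -> bounded_measurable A (fun t => k * f t).
Proof. by apply: bounded_measurableM => //; exact: bounded_measurable_cst. Qed.

End BoundedMeasurable.

Lemma continuous_itv_bounded (R : realType) (a b : R) (f : R -> R) :
  {within `[a, b]%classic, continuous f} ->
  exists2 M, 0 < M & forall t, `[a, b]%classic t -> `|f t| <= M.
Proof.
move=> fc; have [M [_ HM]] :=
  compact_bounded (continuous_compact fc (@segment_compact _ a b)).
exists (`|M| + 1) => [|t abt]; first by rewrite ltr_pwDr.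
apply: (HM (`|M| + 1)); last by exists t.
by rewrite (le_lt_trans (ler_norm M)) // ltrDl.
Qed.

Lemma continuous_bounded_measurable (R : realType) (a b : R) (f : R -> R) :
  {within `[a, b]%classic, continuous f} -> bounded_measurable `[a, b]%classic f.
Proof.
move=> fc; split.
  exact: measurable_realfun.subspace_continuous_measurable_fun.
by have [M _ fM] := continuous_itv_bounded fc; exists M.
Qed.

Lemma bounded_measurable_integrable (R : realType) (a b : R) (D : set R) f :
  measurable D -> D `<=` `[a, b]%classic ->
  bounded_measurable `[a, b]%classic f ->
  (@lebesgue_measure R).-integrable D (EFin \o f).
Proof.
move=> mD Dab [mf [B fB]].
suff fi : (@lebesgue_measure R).-integrable `[a, b] (EFin \o f).
  exact: (@integrableS _ _ _ (@lebesgue_measure R) `[a, b]%classic D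
    (EFin \o f) (measurable_itv _) mD Dab fi).
apply: measurable_bounded_integrable => //.
  have := lebesgue_measure_itv `[a, b]; rewrite /= => ->.
  by case: ifP => _ //=; exact: ltry.
exists B; split; first exact: num_real.
by move=> M /ltW BM x abx; exact: le_trans (fB x abx) BM.
Qed.

Lemma Rintegral_itv_cat (R : realType) (a b : itv_bound R) (s : R) f :
  (a <= BRight s)%O -> (BRight s <= b)%O ->
  (@lebesgue_measure R).-integrable [set` Interval a b] (EFin \o f) ->
  \int[lebesgue_measure]_(t in [set` Interval a b]) f t =
  \int[lebesgue_measure]_(t in [set` Interval a (BRight s)]) f t +
  \int[lebesgue_measure]_(t in [set` Interval (BRight s) b]) f t.
Proof. by move=> ? ? fi; rewrite -(Rintegral_itvB fi) // addrC subrK. Qed.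

Lemma Rintegral_cst_itv_oc (R : realType) (a b k : R) : a <= b ->
  \int[lebesgue_measure]_(t in `]a, b]) k = k * (b - a).
Proof.
move=> ab; rewrite Rintegral_cst //.
have := lebesgue_measure_itv `]a, b]; rewrite /= lte_fin => ->.
by case: ltgtP ab => // <- _; rewrite subrr mulr0.
Qed.

Lemma ae_eq_Rintegral d (T : measurableType d) (R : realType)
    (mu : {measure set T -> \bar R}) (D : set T) (f g : T -> R) :
  measurable D -> measurable_fun D f -> measurable_fun D g ->
  {ae mu, forall t, D t -> f t = g t} ->
  \int[mu]_(t in D) f t = \int[mu]_(t in D) g t.
Proof.
move=> mD mf mg fg; congr fine.
apply: ae_eq_integral => //; try exact/measurable_realfun.measurable_EFinP.
by apply: filterS fg => t fgt Dt; rewrite fgt.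
Qed.

Lemma ge0_Rintegral_eq0_ae d (T : measurableType d) (R : realType)
    (mu : {measure set T -> \bar R}) (D : set T) (f : T -> R) :
  measurable D -> mu.-integrable D (EFin \o f) -> (forall t, 0 <= f t) ->
  \int[mu]_(t in D) f t = 0 -> {ae mu, forall t, D t -> f t = 0}.
Proof.
move=> mD fi f_ge0 f0.
have : ae_eq mu D (EFin \o f) (cst 0%E).
  apply/(ae_eq_integral_abs mu mD); first exact: (measurable_int mu fi).
  under eq_integral do rewrite /= ger0_norm //.
  by rewrite -(fineK (integrable_fin_num mD fi)) -/(Rintegral mu D f) f0.
by apply: filterS => t f0t /f0t [].
Qed.

Lemma exists_pos_mul_lt (R : realFieldType) (T k b : R) :
  0 < T -> 0 <= k -> 0 < b -> exists2 e, 0 < e <= T & k * e < b.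
Proof.
move=> T_gt0 k_ge0 b_gt0; have k1_gt0 : 0 < k + 1 := ltr_wpDl k_ge0 ltr01.
exists (Num.min T (b / (k + 1))); first by rewrite lt_min T_gt0 divr_gt0 //= ge_min lexx.
have e_le : Num.min T (b / (k + 1)) <= b / (k + 1) by rewrite ge_min lexx orbT.
apply: le_lt_trans (ler_wpM2l k_ge0 e_le) _.
by rewrite mulrA ltr_pdivrMr // mulrDr mulr1 mulrC ltrDl.
Qed.

Lemma admissible_ae_bounded (R : realType) (T u1 : R) (u : R -> R) :
  0 <= u1 -> admissible T u1 u ->
  exists v : R -> R,
    [/\ measurable_fun `[0, T] v, forall t, 0 <= v t, forall t, v t <= u1
      & {ae lebesgue_measure, forall t, `[0, T]%classic t -> u t = v t}].
Proof.
move=> u1_ge0 [mu aeu]; exists (fun t => Num.min (Num.max (u t) 0) u1); split.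
- apply: measurable_realfun.measurable_minr; last exact: measurable_cst.
  by apply: measurable_realfun.measurable_maxr => //; exact: measurable_cst.
- by move=> t; rewrite le_min le_max lexx orbT.
- by move=> t; rewrite ge_min lexx orbT.
apply: filterS aeu => t ut /ut /andP[u0 u_le].
by rewrite (max_idPl u0) (min_idPl u_le).
Qed.

Section AeEqControls.
Variables (R : realType) (T : R) (u v x : R -> R).
Hypotheses (u_meas : measurable_fun `[0, T] u) (v_meas : measurable_fun `[0, T] v).
Hypothesis x_cont : {within `[0, T], continuous x}.
Hypothesis uv : {ae lebesgue_measure, forall t, `[0, T]%classic t -> u t = v t}.

Let m0T : measurable `[0, T]%classic. Proof. exact: measurable_itv. Qed.

Let x_meas : measurable_fun `[0, T] x.
Proof. exact: measurable_realfun.subspace_continuous_measurable_fun. Qed.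

Lemma is_state_ae_eq R0 N sigma :
  is_state T R0 N sigma u x -> is_state T R0 N sigma v x.
Proof.
move=> [_ x_state]; split => // t /andP[t0 tT]; rewrite x_state ?t0 ?tT //.
have sub : `[0, t]%classic `<=` `[0, T]%classic.
  by apply: subset_itvScc; rewrite bnd_simp.
have drift_meas (w : R -> R) : measurable_fun `[0, T] w ->
    measurable_fun `[0, t] (fun r => - w r * x r + N%:R * sigma ^+ 2).
  move=> w_meas; apply: (measurable_funS m0T sub).
  apply: measurable_realfun.measurable_funD => //.
  apply: measurable_realfun.measurable_funM => //.
  exact: measurable_realfun.measurable_funN.
congr (_ + _); apply: ae_eq_Rintegral; first exact: measurable_itv.
- exact: drift_meas.
- exact: drift_meas.
by apply: filterS uv => r uvr /sub /uvr ->.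
Qed.

Lemma cost_ae_eq alpha beta : cost T alpha beta u x = cost T alpha beta v x.
Proof.
apply: ae_eq_Rintegral; first exact: measurable_itv.
- by apply: measurable_realfun.measurable_funD; apply: measurable_realfun.measurable_funM.
- by apply: measurable_realfun.measurable_funD; apply: measurable_realfun.measurable_funM.
by apply: filterS uv => r uvr /uvr ->.
Qed.

End AeEqControls.

Definition switch_off (R : realType) (s : R) (u : R -> R) (t : R) : R :=
  if t <= s then u t else 0.

Definition switch_off_state (R : realType) (c s : R) (x : R -> R) (t : R) : R :=
  x (Num.min t s) + c * Num.max (t - s) 0.

Section SwitchOff.
Variables (R : realType) (T R0 sigma u1 : R) (N : nat) (u x : R -> R) (s : R).
Hypotheses (s_ge0 : 0 <= s) (s_lt_T : s < T).
Hypotheses (u_meas : measurable_fun `[0, T] u).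
Hypotheses (u_ge0 : forall t, 0 <= u t) (u_le : forall t, u t <= u1).
Hypotheses (x_cont : {within `[0, T], continuous x}).
Hypothesis (x_state : is_state T R0 N sigma u x).

Local Notation c := (N%:R * sigma ^+ 2).
Local Notation u' := (switch_off s u).
Local Notation x' := (switch_off_state c s x).

Lemma switch_off_state_before t : t <= s -> x' t = x t.
Proof.
move=> ts; rewrite /switch_off_state (min_idPl ts) (max_idPr _) ?mulr0 ?addr0 //.
by rewrite subr_le0.
Qed.

Lemma switch_off_state_after t : s <= t -> x' t = x s + c * (t - s).
Proof.
by move=> st; rewrite /switch_off_state (min_idPr st) (max_idPl _) // subr_ge0.
Qed.

Let m0T : measurable `[0, T]%classic. Proof. exact: measurable_itv. Qed.

Let sub0T (a b : R) (b0 b1 : bool) : 0 <= a -> b <= T ->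
  [set` Interval (BSide b0 a) (BSide b1 b)] `<=` `[0, T]%classic.
Proof. by move=> a0 bT; apply: subset_itvScc; rewrite bnd_simp. Qed.

Let itv_integrable (f : R -> R) (a b : R) (b0 b1 : bool) : 0 <= a -> b <= T ->
  bounded_measurable `[0, T]%classic f ->
  lebesgue_measure.-integrable [set` Interval (BSide b0 a) (BSide b1 b)] (EFin \o f).
Proof.
move=> a0 bT fb; apply: bounded_measurable_integrable fb.
  exact: measurable_itv.
exact: sub0T.
Qed.

Let u_bm : bounded_measurable `[0, T]%classic u.
Proof. by split => //; exists u1 => t _; rewrite ger0_norm. Qed.

Let x_bm : bounded_measurable `[0, T]%classic x.
Proof. exact: continuous_bounded_measurable. Qed.

Let ux_bm : bounded_measurable `[0, T]%classic (fun r => - u r * x r).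
Proof. by apply: bounded_measurableM => //; exact: bounded_measurableN. Qed.

Let drift_bm : bounded_measurable `[0, T]%classic (fun r => - u r * x r + c).
Proof. by apply: bounded_measurableD => //; exact: bounded_measurable_cst. Qed.

Lemma state_increment t1 t2 : 0 <= t1 -> t1 <= t2 -> t2 <= T ->
  x t2 - x t1 = \int[lebesgue_measure]_(r in `]t1, t2]) (- u r * x r + c).
Proof.
move=> t10 t12 t2T; have t20 := le_trans t10 t12.
rewrite (proj2 x_state t2) ?t20 ?t2T // (proj2 x_state t1) ?t10 ?(le_trans t12 t2T) //.
rewrite (@Rintegral_itv_cat _ _ _ t1) ?bnd_simp //; first ring.
exact: itv_integrable.
Qed.

Let u'_meas : measurable_fun `[0, T] u'.
Proof.
apply: measurable_fun_if => //.
  exact: (measurable_realfun.measurable_fun_ler (@measurable_id _ _ _)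
    (measurable_cst s)).
exact: measurable_funS m0T (@subIsetl _ _ _) u_meas.
Qed.

Let u'_bm : bounded_measurable `[0, T]%classic u'.
Proof.
split => //; exists u1 => t _; rewrite /switch_off; case: ifP => _.
  by rewrite ger0_norm ?u_le ?u_ge0.
by rewrite normr0 (le_trans (u_ge0 0)).
Qed.

Lemma admissible_switch_off : admissible T u1 u'.
Proof.
split => //; apply: aeW => t _; rewrite /switch_off.
by case: ifP => _; rewrite ?u_ge0 ?u_le ?lexx ?(le_trans (u_ge0 0) (u_le 0)).
Qed.

Lemma switch_off_state_continuous : {within `[0, T], continuous x'}.
Proof.
have -> : `[0, T]%classic = `[0, s]%classic `|` `[s, T]%classic.
  apply/seteqP; split => t /=; rewrite !in_itv /=.
    by move=> /andP[-> tT]; case: (leP t s) => ts; [left|right; rewrite (ltW ts)].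
  case=> /andP[t0 tT]; apply/andP; split => //.
  - exact: le_trans tT (ltW s_lt_T).
  - exact: le_trans s_ge0 t0.
apply: withinU_continuous; [exact: itv_closed|exact: itv_closed| |].
- apply: (@subspace_eq_continuous _ _ _ x).
    move=> t; rewrite inE /= in_itv /= => /andP[_ ts].
    exact: esym (switch_off_state_before ts).
  apply: continuous_subspaceW x_cont; apply: subset_itvScc; rewrite bnd_simp //.
  exact: ltW.
- apply: (@subspace_eq_continuous _ _ _ (fun t => x s + c * (t - s))).
    move=> t; rewrite inE /= in_itv /= => /andP[st _].
    exact: esym (switch_off_state_after st).
  apply: continuous_subspaceT => t.
  apply: cvgD; first exact: cvg_cst.
  apply: cvgM; first exact: cvg_cst.
  by apply: cvgB; [exact: cvg_id|exact: cvg_cst].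
Qed.

Let x'_bm : bounded_measurable `[0, T]%classic x'.
Proof. exact: continuous_bounded_measurable switch_off_state_continuous. Qed.

Let drift'_bm : bounded_measurable `[0, T]%classic (fun r => - u' r * x' r + c).
Proof.
apply: bounded_measurableD => //; last exact: bounded_measurable_cst.
by apply: bounded_measurableM => //; exact: bounded_measurableN.
Qed.

Lemma is_state_switch_off : is_state T R0 N sigma u' x'.
Proof.
split => [|t /andP[t0 tT]]; first exact: switch_off_state_continuous.
have [ts|st] := leP t s.
  rewrite switch_off_state_before // (proj2 x_state t) ?t0 ?tT //; congr (_ + _).
  apply: eq_Rintegral => r; rewrite inE /= in_itv /= => /andP[_ rt].
  have rs := le_trans rt ts.
  by rewrite /switch_off rs switch_off_state_before.
rewrite switch_off_state_after ?(ltW st) // (@Rintegral_itv_cat _ _ _ s); last 3 first.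
- by rewrite bnd_simp.
- by rewrite bnd_simp ltW.
- exact: itv_integrable.
have -> : \int[lebesgue_measure]_(r in `[0, s]) (- u' r * x' r + c) = x s - R0.
  rewrite (proj2 x_state s) ?s_ge0 ?(ltW s_lt_T) // addrC addKr.
  apply: eq_Rintegral => r; rewrite inE /= in_itv /= => /andP[_ rs].
  by rewrite /switch_off rs switch_off_state_before.
have -> : \int[lebesgue_measure]_(r in `]s, t]) (- u' r * x' r + c) = c * (t - s).
  rewrite -Rintegral_cst_itv_oc ?ltW //; apply: eq_Rintegral => r.
  rewrite inE /= in_itv /= /switch_off => /andP[sr _].
  by rewrite leNgt sr mulNr mul0r oppr0 add0r.
ring.
Qed.

Variables (M : R) (x_le_M : forall t, `[0, T]%classic t -> `|x t| <= M).

Local Notation U := (\int[lebesgue_measure]_(r in `]s, T]) u r).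

Lemma switch_off_state_le t : s < t <= T -> x' t <= x t + M * U.
Proof.
move=> /andP[st tT]; have t0 := le_trans s_ge0 (ltW st).
have t0T : `[0, T]%classic t by rewrite /= in_itv /= t0 tT.
have M_ge0 := le_trans (normr_ge0 _) (x_le_M t0T).
have := state_increment s_ge0 (ltW st) tT.
rewrite switch_off_state_after ?(ltW st) // RintegralD ?Rintegral_cst_itv_oc ?(ltW st) //.
- move=> incr.
  have ux_ge : - (M * \int[lebesgue_measure]_(r in `]s, t]) u r) <=
               \int[lebesgue_measure]_(r in `]s, t]) (- u r * x r).
    rewrite -mulNr -RintegralZl; [|exact: measurable_itv|exact: itv_integrable].
    apply: le_Rintegral; first exact: measurable_itv.
    - by apply: itv_integrable => //; exact: bounded_measurableZ.
    - exact: itv_integrable.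
    move=> r /(sub0T s_ge0 tT) r0T; rewrite !mulNr lerN2 [M * _]mulrC.
    by apply: ler_wpM2l; [exact: u_ge0|exact: le_trans (ler_norm _) (x_le_M r0T)].
  have u_le_U : \int[lebesgue_measure]_(r in `]s, t]) u r <= U.
    rewrite [U](@Rintegral_itv_cat _ _ _ t) ?bnd_simp ?(ltW st) //.
      by rewrite lerDl; apply: Rintegral_ge0.
    exact: itv_integrable.
  rewrite -subr_ge0 (_ : _ - _ =
      \int[lebesgue_measure]_(r in `]s, t]) (- u r * x r) + M * U).
    by rewrite -(addNr (M * \int[lebesgue_measure]_(r in `]s, t]) u r)) lerD // ler_wpM2l.
  by rewrite -[x t](subrK (x s)) incr; ring.
- exact: itv_integrable.
- by apply: itv_integrable => //; exact: bounded_measurable_cst.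
Qed.

Lemma cost_switch_off_le alpha beta : 0 <= alpha ->
  cost T alpha beta u' x' <=
  cost T alpha beta u x + (alpha * M * (T - s) - beta) * U.
Proof.
move=> alpha_ge0.
have ax_bm : bounded_measurable `[0, T]%classic (fun r => alpha * x r).
  exact: bounded_measurableZ.
have bu_bm : bounded_measurable `[0, T]%classic (fun r => beta * u r).
  exact: bounded_measurableZ.
have costE v y : bounded_measurable `[0, T]%classic v ->
    bounded_measurable `[0, T]%classic y ->
    cost T alpha beta v y =
    \int[lebesgue_measure]_(r in `[0, s]) (alpha * y r + beta * v r) +
    \int[lebesgue_measure]_(r in `]s, T]) (alpha * y r + beta * v r).
  move=> vb yb; rewrite /cost [LHS](@Rintegral_itv_cat _ _ _ s) ?bnd_simp ?(ltW s_lt_T) //.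
  by apply: itv_integrable => //; apply: bounded_measurableD => //;
    exact: bounded_measurableZ.
rewrite !costE //.
have -> : \int[lebesgue_measure]_(r in `[0, s]) (alpha * x' r + beta * u' r) =
          \int[lebesgue_measure]_(r in `[0, s]) (alpha * x r + beta * u r).
  apply: eq_Rintegral => r; rewrite inE /= in_itv /= => /andP[_ rs].
  by rewrite /switch_off rs switch_off_state_before.
have -> : \int[lebesgue_measure]_(r in `]s, T]) (alpha * x' r + beta * u' r) =
          \int[lebesgue_measure]_(r in `]s, T]) (alpha * x' r).
  apply: eq_Rintegral => r; rewrite inE /= in_itv /= => /andP[sr _].
  by rewrite /switch_off leNgt sr mulr0 addr0.
have x'_le : \int[lebesgue_measure]_(r in `]s, T]) (alpha * x' r) <=
             \int[lebesgue_measure]_(r in `]s, T]) (alpha * x r + alpha * M * U).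
  apply: le_Rintegral; first exact: measurable_itv.
  - by apply: itv_integrable => //; exact: bounded_measurableZ.
  - apply: itv_integrable => //; apply: bounded_measurableD => //.
    exact: bounded_measurable_cst.
  move=> r; rewrite /= in_itv /= => srT; rewrite -mulrA -mulrDr.
  by apply: ler_wpM2l => //; exact: switch_off_state_le.
rewrite RintegralD ?itv_integrable // in x'_le; last exact: bounded_measurable_cst.
rewrite Rintegral_cst_itv_oc ?(ltW s_lt_T) // in x'_le.
have -> : \int[lebesgue_measure]_(r in `]s, T]) (alpha * x r + beta * u r) =
          \int[lebesgue_measure]_(r in `]s, T]) (alpha * x r) + beta * U.
  rewrite RintegralD ?itv_integrable //.
  by congr (_ + _); rewrite RintegralZl //; exact: itv_integrable.
rewrite -addrA lerD2l; apply: le_trans x'_le _.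
by rewrite le_eqVlt; apply/orP; left; apply/eqP; ring.
Qed.

Lemma switch_off_cost_ge_ae0 alpha beta :
  0 <= alpha -> alpha * M * (T - s) < beta ->
  cost T alpha beta u x <= cost T alpha beta u' x' ->
  {ae lebesgue_measure, forall t, `]s, T]%classic t -> u t = 0}.
Proof.
move=> alpha_ge0 small u_opt.
apply: (ge0_Rintegral_eq0_ae _ (itv_integrable _ _ s_ge0 (lexx T) u_bm) u_ge0).
  exact: measurable_itv.
apply/eqP; rewrite eq_le Rintegral_ge0 // andbT.
rewrite -(@nmulr_rge0 _ (alpha * M * (T - s) - beta)) ?subr_lt0 //.
by rewrite -(lerDl (cost T alpha beta u x)) (le_trans u_opt) ?cost_switch_off_le.
Qed.

End SwitchOff.

Theorem lemma3 (R : realType) (T alpha beta sigma u1 R0 : R) (N : nat)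
    (uhat : R -> R) :
  0 < T -> 0 < alpha -> 0 < beta -> 0 < sigma -> 0 < u1 -> (0 < N)%N ->
  optimal_control T alpha beta sigma u1 R0 N uhat ->
  exists eps : R, 0 < eps /\ eps <= T /\
    {ae (@lebesgue_measure R), forall t, t \in `]T - eps, T[ -> uhat t = 0}.
Proof.
move=> T_gt0 alpha_gt0 beta_gt0 _ u1_gt0 _ [uhat_adm [x [x_state opt]]].
have x_cont := x_state.1.
have [v [v_meas v_ge0 v_le uv]] := admissible_ae_bounded (ltW u1_gt0) uhat_adm.
have v_state := is_state_ae_eq uhat_adm.1 v_meas x_cont uv x_state.
have [M M_gt0 x_le_M] := continuous_itv_bounded x_cont.
have [eps /andP[eps_gt0 eps_le_T]] :=
  exists_pos_mul_lt T_gt0 (ltW (mulr_gt0 alpha_gt0 M_gt0)) beta_gt0.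
rewrite -{1}(subKr T eps) => eps_small; exists eps; do 2 split => //.
have s_ge0 : 0 <= T - eps by rewrite subr_ge0.
have s_lt_T : T - eps < T by rewrite ltrBlDr ltrDl.
have v_opt : cost T alpha beta v x <= cost T alpha beta (switch_off (T - eps) v)
    (switch_off_state (N%:R * sigma ^+ 2) (T - eps) x).
  rewrite -(cost_ae_eq uhat_adm.1 v_meas x_cont uv); apply: opt.
    exact: admissible_switch_off.
  exact: is_state_switch_off.
have := switch_off_cost_ge_ae0 s_ge0 s_lt_T v_meas v_ge0 v_le x_cont v_state
  x_le_M (ltW alpha_gt0) eps_small v_opt.
apply: filterS2 uv => t uvt vt; rewrite in_itv /= => /andP[st tT].
by rewrite uvt ?vt //= in_itv /= ?st ?(ltW tT) ?(le_trans s_ge0 (ltW st)).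
Qed.
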